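(* Let $B$ be a connected building set on $V=[n]$. Then $$F(P_B)=\sum_{\alpha\models n}\zeta_\alpha(B)M_\alpha,$$ where $\zeta_\alpha(B)$ is the number of splitting chains of $B$ of type $\alpha$.
   Context: A building set on a finite set $V$ is a collection $B$ of nonempty subsets of $V$ such that $\{v\}\in B$ for all $v\in V$ and such that $I,J\in B$, $I\cap J\neq\emptyset$ imply $I\cup J\in B$. It is connected if $V\in B$, and discrete if it consists only of the singletons. For $I\subseteq V$, the restriction is $B|_I=\{J\in B: J\subseteq I\}$ (a building set on $I$) and the contraction is $B/I=\{J\subseteq V\setminus I: J\neq\emptyset,\ J\in B\text{ or }J\cup I'\in B\text{ for some }I'\subseteq I\}$ (a building set on $V\setminus I$). The nestohedron of $B$ is the Minkowski sum $P_B=\sum_{I\in B}\mathrm{Conv}\{e_i: i\in I\}\subset\mathbb{R}^V$. For a convex polytope $Q\subset\mathbb{R}^V$, a function $f:V\to\mathbb{N}=\{1,2,\dots\}$ is $Q$-generic if the linear functional $x\mapsto\sum_{v\in V}f(v)x_v$ attains its maximum over $Q$ at a unique point. Set $F(Q)=\sum_{f\ Q\text{-generic}}\prod_{v\in V}x_{f(v)}$, a formal power series in commuting variables $x_1,x_2,\dots$. For a composition $\alpha=(a_1,\dots,a_k)$ of $n$ (written $\alpha\models n$; $k(\alpha)=k$ is its length), $M_\alpha=\sum_{i_1<\dots<i_k}x_{i_1}^{a_1}\cdots x_{i_k}^{a_k}$ is the monomial quasisymmetric function, with $M_{()}=1$. A splitting chain of $B$ of type $\alpha=(a_1,\dots,a_k)\models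 n$ is a chain $\emptyset=I_0\subsetneq I_1\subsetneq\cdots\subsetneq I_k=V$ such that for every $1\le j\le k$ the building set $(B|_{I_j})/I_{j-1}$ (on $I_j\setminus I_{j-1}$) is discrete and $|I_j\setminus I_{j-1}|=a_j$. *)

From HB Require Import structures.
From mathcomp Require Import all_boot all_order all_algebra.
From Stdlib Require Import ClassicalEpsilon.
Set Implicit Arguments. Unset Strict Implicit. Unset Printing Implicit Defensive.
Import Order.TTheory GRing.Theory Num.Theory.

Definition pbool (P : Prop) : bool :=
  if excluded_middle_informative P then true else false.

Section Building.
Variable n : nat.
Implicit Types (B C : {set {set 'I_n}}) (I J W : {set 'I_n}).

Definition building_set B : Prop :=
  [/\ set0 \notin B,
      (forall v : 'I_n, [set v] \in B) &
      (forall I J, I \in B -> J \in B -> I :&: J != set0 -> I :|: J \in B)].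

Definition connected_bs B : Prop := [set: 'I_n] \in B.

Definition discrete_on W C : bool := C == [set [set w] | w in W].

Definition restrict B I : {set {set 'I_n}} := [set J in B | J \subset I].

(* contraction C/I, where C is a building set on the ground set W
   (so C/I is a building set on W \ I) *)
Definition contract W C I : {set {set 'I_n}} :=
  [set J : {set 'I_n} | [&& J != set0, J \subset W :\: I &
     (J \in C) || [exists I' : {set 'I_n}, (I' \subset I) && (J :|: I' \in C)]]].

Definition splitting_chain B (alpha : seq nat) (c : (size alpha).+1.-tuple {set 'I_n}) : bool :=
  let I j := nth set0 c j in
  [&& I 0 == set0, I (size alpha) == [set: 'I_n] &
    all (fun j =>
      [&& I j \proper I j.+1,
          #|I j.+1 :\: I j| == nth 0 alpha j &
          discrete_on (I j.+1 :\: I j) (contract (I j.+1) (restrict B (I j.+1)) (I j))])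
      (iota 0 (size alpha))].

Arguments splitting_chain B alpha c : clear implicits.

Definition zeta B (alpha : seq nat) : nat :=
  #|[set c : (size alpha).+1.-tuple {set 'I_n} | splitting_chain B alpha c]|.

End Building.

Definition is_composition (m : nat) (alpha : seq nat) : bool :=
  all (fun a => 0 < a) alpha && (sumn alpha == m).

Fixpoint seqs_upto (k : nat) (xs : seq nat) : seq (seq nat) :=
  match k with
  | 0 => [:: [::]]
  | k'.+1 => [::] :: [seq x :: s | x <- xs, s <- seqs_upto k' xs]
  end.

Definition compositions (m : nat) : seq (seq nat) :=
  undup [seq a <- seqs_upto m (iota 1 m) | is_composition m a].

(* A series is given by its coefficients: a monomial x_1^{s_0} x_2^{s_1} ...
   x_k^{s_(k-1)} is encoded by the exponent list s (trailing zeros allowed). *)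
Definition qseries := seq nat -> nat.

Definition qsum (I : Type) (r : seq I) (c : I -> nat) (G : I -> qseries) : qseries :=
  fun s => \sum_(i <- r) c i * G i s.

(* monomial quasisymmetric function M_alpha: coefficient of x^s is 1 iff the
   nonzero exponents of s, read in increasing variable order, form alpha *)
Definition Mqsym (alpha : seq nat) : qseries :=
  fun s => [seq e <- s | e != 0] == alpha.

Section Polytopes.
Variables (R : realFieldType) (n : nat).
Local Open Scope ring_scope.

Definition vpoint := 'rV[R]_n.

Definition basisvec (i : 'I_n) : vpoint := delta_mx 0 i.

Definition in_conv (I : {set 'I_n}) (p : 'I_n -> vpoint) (x : vpoint) : Prop :=
  exists lam : 'I_n -> R,
    [/\ forall i, 0 <= lam i, \sum_(i in I) lam i = 1 &
        x = \sum_(i in I) lam i *: p i].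

Definition nestohedron (B : {set {set 'I_n}}) (x : vpoint) : Prop :=
  exists y : {set 'I_n} -> vpoint,
    (forall I, I \in B -> in_conv I basisvec (y I)) /\ x = \sum_(I in B) y I.

Definition pairing (f : 'I_n -> nat) (x : vpoint) : R :=
  \sum_(v < n) (f v)%:R * x 0 v.

Definition generic (Q : vpoint -> Prop) (f : 'I_n -> nat) : Prop :=
  exists x, [/\ Q x, (forall y, Q y -> pairing f y <= pairing f x) &
                     (forall y, Q y -> pairing f y = pairing f x -> y = x)].

(* F(Q) = sum_{f : V -> {1,2,...} Q-generic} prod_v x_{f(v)}.
   Coefficient of x^s: number of Q-generic f with |f^{-1}(i+1)| = s_i for all i.
   Such f take values in {1,...,size s}; g below is f - 1. *)
Definition Fser (Q : vpoint -> Prop) : qseries :=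
  fun s => #|[set g : {ffun 'I_n -> 'I_(size s)} |
               pbool (generic Q (fun v => (g v).+1)) &&
               [forall i : 'I_(size s), #|[set v | g v == i]| == nth 0 s i]]|.

End Polytopes.

(* A linear functional f attains its maximum over Conv{e_i : i in I} exactly at the
   vertices e_i with f(i) maximal on I, so its maximum over the Minkowski sum P_B is
   attained at a unique point iff f has a unique maximizer on every member of B.
   Let I_j be the set where f lies below its j-th smallest value. The contraction
   (B|_{I_j})/I_{j-1} is discrete iff no member of B inside I_j meets the top level
   I_j \ I_{j-1} twice, which is again the unique-maximizer condition. So f |-> (I_j)
   is a bijection from the generic f whose level sets have sizes given by the
   exponent vector s onto the splitting chains of type "s with its zeros removed",
   and comparing coefficients gives the identity. *)

From mathcomp Require Import all_boot all_order all_algebra.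
From Stdlib Require Import ClassicalEpsilon FunctionalExtensionality.
Set Implicit Arguments. Unset Strict Implicit. Unset Printing Implicit Defensive.
Import Order.TTheory GRing.Theory Num.Theory.

Lemma pboolP (P : Prop) : reflect P (pbool P).
Proof. by rewrite /pbool; case: excluded_middle_informative => h; constructor. Qed.

Notation nonzeros s := [seq e <- s | e != 0].

(* A nonzero exponent of x_(i+1) in the monomial with exponent vector s is the part of index
   nz_rank s i of the composition nonzeros s. *)
Definition nz_rank (s : seq nat) (i : nat) : nat := count (fun e => e != 0) (take i s).

Section NonzeroRank.
Variable s : seq nat.

Lemma nz_rank_mono : {homo nz_rank s : i j / i <= j}.
Proof.
move=> i j hij; rewrite /nz_rank -(take_takel s hij).
by rewrite -{2}(cat_take_drop i (take j s)) count_cat leq_addr.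
Qed.

Lemma nz_rankS i : i < size s -> nz_rank s i.+1 = nz_rank s i + (nth 0 s i != 0).
Proof. by move=> hi; rewrite /nz_rank (take_nth 0 hi) -cats1 count_cat /= addn0. Qed.

Lemma nz_rank_lt i j : i < j -> i < size s -> nth 0 s i != 0 -> nz_rank s i < nz_rank s j.
Proof.
move=> hij hi si; apply: (@leq_trans (nz_rank s i.+1)); last exact: nz_rank_mono.
by rewrite nz_rankS // si addn1.
Qed.

Lemma leq_nz_rank i j : j < size s -> nth 0 s j != 0 ->
  (nz_rank s i <= nz_rank s j) = (i <= j).
Proof.
move=> hj sj; case: (leqP i j) => hij; first exact: nz_rank_mono.
by apply/negbTE; rewrite -ltnNge; apply: nz_rank_lt.
Qed.

Lemma nz_rank_inj i j : i < size s -> j < size s -> nth 0 s i != 0 -> nth 0 s j != 0 ->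
  nz_rank s i = nz_rank s j -> i = j.
Proof.
move=> hi hj si sj e; apply/eqP; rewrite eqn_leq.
by rewrite -(leq_nz_rank _ hj sj) -(leq_nz_rank _ hi si) e !leqnn.
Qed.

Lemma nz_rank_lt_size i : i < size s -> nth 0 s i != 0 -> nz_rank s i < size (nonzeros s).
Proof.
move=> hi si; have -> : size (nonzeros s) = nz_rank s (size s).
  by rewrite /nz_rank take_size size_filter.
exact: nz_rank_lt.
Qed.

End NonzeroRank.

Lemma nth_nonzeros s i : i < size s -> nth 0 s i != 0 ->
  nth 0 (nonzeros s) (nz_rank s i) = nth 0 s i.
Proof.
elim: s i => [|e s IH] [|i] //=; first by move=> _ ->.
by move=> hi si; rewrite /nz_rank /=; case: (e != 0) => /=; rewrite IH.
Qed.

Lemma nz_rank_surj s j : j < size (nonzeros s) ->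
  exists i : 'I_(size s), nth 0 s i != 0 /\ nz_rank s i = j.
Proof.
elim: s j => [|e s IH] j //=.
have shift (i : 'I_(size s)) : i.+1 < size (e :: s) := ltn_ord i.
case se: (e != 0) => /=; last first.
  by move=> /IH [i [si <-]]; exists (Ordinal (shift i)); rewrite /nz_rank /= se.
case: j => [|j]; first by exists (Ordinal (ltn0Sn (size s))); rewrite se.
by move=> /IH [i [si <-]]; exists (Ordinal (shift i)); rewrite /nz_rank /= se.
Qed.

Definition is_max_on n (f : 'I_n -> nat) (I : {set 'I_n}) (a : 'I_n) : bool :=
  (a \in I) && [forall c in I, f c <= f a].

Definition unique_maxima n (B : {set {set 'I_n}}) (f : 'I_n -> nat) : Prop :=
  forall K a b, K \in B -> is_max_on f K a -> is_max_on f K b -> a = b.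

Section Maxima.
Variable n : nat.
Implicit Types (f : 'I_n -> nat) (I : {set 'I_n}) (B : {set {set 'I_n}}).

Lemma is_max_onP f I a : reflect (a \in I /\ forall c, c \in I -> f c <= f a) (is_max_on f I a).
Proof. by apply: (iffP andP) => -[aI /forall_inP]. Qed.

Lemma eq_is_max_on f1 f2 I : (forall a b, (f1 a <= f1 b) = (f2 a <= f2 b)) ->
  is_max_on f1 I =1 is_max_on f2 I.
Proof. by move=> f12 a; congr (_ && _); apply: eq_forallb => c; rewrite f12. Qed.

Lemma eq_unique_maxima B f1 f2 : (forall a b, (f1 a <= f1 b) = (f2 a <= f2 b)) ->
  unique_maxima B f1 <-> unique_maxima B f2.
Proof.
move=> f12; split=> uniq K a b KB.
- by rewrite -!(eq_is_max_on K f12); apply: uniq.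
- by rewrite !(eq_is_max_on K f12); apply: uniq.
Qed.

Definition max_choice f (d : 'I_n) I : 'I_n := odflt d [pick a | is_max_on f I a].

Lemma max_choiceP f d I : I != set0 -> is_max_on f I (max_choice f d I).
Proof.
rewrite /max_choice; case: pickP => [//|none /set0Pn[a0 Ia0]].
have [a Ia amax] := arg_maxnP f Ia0.
by have /is_max_onP[] := none a; split.
Qed.

End Maxima.

Section Nestohedron.
Variables (R : realFieldType) (n : nat).
Implicit Types (f : 'I_n -> nat) (I K : {set 'I_n}) (B : {set {set 'I_n}}).
Local Open Scope ring_scope.

Lemma pairingD f (x y : vpoint R n) : pairing f (x + y) = pairing f x + pairing f y.
Proof. by rewrite /pairing -big_split; apply: eq_bigr => v _; rewrite mxE mulrDr. Qed.

Lemma pairing0 f : pairing f (0 : vpoint R n) = 0.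
Proof. by rewrite /pairing big1 // => v _; rewrite mxE mulr0. Qed.

Lemma pairing_sum f (T : Type) (r : seq T) (P : pred T) (F : T -> vpoint R n) :
  pairing f (\sum_(i <- r | P i) F i) = \sum_(i <- r | P i) pairing f (F i).
Proof. exact: (big_morph _ (pairingD f) (pairing0 f)). Qed.

Lemma pairingZ f a (x : vpoint R n) : pairing f (a *: x) = a * pairing f x.
Proof. by rewrite /pairing mulr_sumr; apply: eq_bigr => v _; rewrite mxE mulrCA. Qed.

Lemma pairing_basisvec f i : pairing f (basisvec R i) = (f i)%:R.
Proof.
rewrite /pairing (bigD1 i) //= big1 ?addr0 => [|v vi]; first by rewrite mxE !eqxx mulr1.
by rewrite mxE (negbTE vi) andbF mulr0.
Qed.

Lemma basisvec_inj : injective (basisvec R (n := n)).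
Proof.
move=> a b /(congr1 (fun x : vpoint R n => x 0 a)); rewrite !mxE !eqxx /=.
by case: eqP => // _ /eqP; rewrite oner_eq0.
Qed.

Lemma in_conv_basisvec I a : a \in I -> in_conv I (@basisvec R n) (basisvec R a).
Proof.
move=> Ia; exists (fun i => (i == a)%:R); split.
- by move=> i; rewrite ler0n.
- by rewrite (bigD1 a) //= eqxx big1 ?addr0 // => i /andP[_ /negbTE->].
- rewrite [RHS](bigD1 a) //= eqxx scale1r big1 ?addr0 // => i /andP[_ /negbTE->].
  by rewrite scale0r.
Qed.

Lemma conv_pairing_le f I y a : in_conv I (@basisvec R n) y -> is_max_on f I a ->
  pairing f y <= (f a)%:R.
Proof.
move=> [lam [lam_ge0 lam1 ->]] /is_max_onP[Ia amax]; rewrite pairing_sum.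
under eq_bigr do rewrite pairingZ pairing_basisvec.
have <- : \sum_(i in I) lam i * (f a)%:R = (f a)%:R by rewrite -mulr_suml lam1 mul1r.
by apply: ler_sum => i Ii; apply: ler_wpM2l => //; rewrite ler_nat amax.
Qed.

(* Equality forces all the weight of the convex combination onto maximizers of f,
   that is, onto a. *)
Lemma conv_pairing_max f I y a : in_conv I (@basisvec R n) y -> is_max_on f I a ->
  (forall c, is_max_on f I c -> c = a) -> pairing f y = (f a)%:R -> y = basisvec R a.
Proof.
move=> [lam [lam_ge0 lam1 ->]] amax uniq.
have /is_max_onP[Ia fa] := amax.
rewrite pairing_sum; under eq_bigr do rewrite pairingZ pairing_basisvec.
move=> val_max.
have gap_ge0 i : i \in I -> 0 <= lam i * ((f a)%:R - (f i)%:R).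
  by move=> Ii; rewrite mulr_ge0 // subr_ge0 ler_nat fa.
have gap0 : \sum_(i in I) lam i * ((f a)%:R - (f i)%:R) = 0.
  under eq_bigr do rewrite mulrBr.
  by rewrite sumrB -mulr_suml lam1 mul1r val_max subrr.
have lam0 i : i \in I -> i != a -> lam i = 0.
  move=> Ii ia; have /eqP := psumr_eq0P gap_ge0 gap0 Ii.
  rewrite mulf_eq0 subr_eq0 eqr_nat => /orP[/eqP //| /eqP fi].
  suff /uniq/eqP : is_max_on f I i by rewrite (negbTE ia).
  by apply/is_max_onP; split=> // c Ic; rewrite -fi fa.
have lam_a : lam a = 1.
  by rewrite (bigD1 a) //= big1 ?addr0 in lam1 => // i /andP[Ii ia]; apply: lam0.
rewrite (bigD1 a) //= big1 ?addr0 => [|i /andP[Ii ia]]; last by rewrite lam0 // scale0r.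
by rewrite lam_a scale1r.
Qed.

Definition vertex B (m : {set 'I_n} -> 'I_n) : vpoint R n := \sum_(I in B) basisvec R (m I).

Lemma vertex_in_nestohedron B m : (forall I, I \in B -> m I \in I) ->
  nestohedron B (vertex B m).
Proof. by move=> mB; exists (fun I => basisvec R (m I)); split=> // I /mB /in_conv_basisvec. Qed.

Lemma nestohedron_pairing_le f B m x : (forall I, I \in B -> is_max_on f I (m I)) ->
  nestohedron B x -> pairing f x <= pairing f (vertex B m).
Proof.
move=> mmax [y [yB ->]]; rewrite !pairing_sum; apply: ler_sum => I IB.
by rewrite pairing_basisvec; apply: conv_pairing_le (yB I IB) (mmax I IB).
Qed.

Lemma generic_unique_maxima B f : set0 \notin B ->
  generic (nestohedron (R := R) B) f -> unique_maxima B f.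
Proof.
move=> B0 [x [Bx xmax xuniq]] K a b KB amax bmax.
pose m c I := if I == K then c else max_choice f a I.
have m_max c : is_max_on f K c -> forall I, I \in B -> is_max_on f I (m c I).
  move=> cmax I IB; rewrite /m; case: eqP => [-> //|_].
  by apply: max_choiceP; apply: contraNneq B0 => <-.
have vertex_x c : is_max_on f K c -> vertex B (m c) = x.
  move=> cmax; have Bm : nestohedron B (vertex B (m c)).
    by apply: vertex_in_nestohedron => I /(m_max c cmax) /andP[].
  apply: xuniq => //; apply/le_anti.
  by rewrite xmax //= nestohedron_pairing_le // => I /(m_max c cmax).
apply: basisvec_inj; apply: (@addIr _ (\sum_(I in B | I != K) basisvec R (m a I))).
have /esym := vertex_x b bmax; rewrite -(vertex_x a amax) /vertex !(bigD1 K KB) /= /m eqxx.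
by congr (_ = _ + _); apply: eq_bigr => I /andP[_ /negbTE ->].
Qed.

Lemma unique_maxima_generic B f : set0 \notin B ->
  unique_maxima B f -> generic (nestohedron (R := R) B) f.
Proof.
move=> B0 uniq; case: (set_0Vmem B) => [->|[K KB]].
  exists 0; split; first by exists (fun _ => 0); split=> [I|]; rewrite ?inE ?big_set0.
  - by move=> y [yI [_ ->]]; rewrite big_set0.
  - by move=> y [yI [_ ->]]; rewrite big_set0.
have [d _] : exists d, d \in K by apply/set0Pn; apply: contraNneq B0 => <-.
pose m := max_choice f d.
have m_max I : I \in B -> is_max_on f I (m I).
  by move=> IB; apply: max_choiceP; apply: contraNneq B0 => <-.
exists (vertex B m); split.
- by apply: vertex_in_nestohedron => I /m_max /andP[].
- by move=> y; apply: nestohedron_pairing_le.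
- move=> y [yI [yIB ->]] val_max; apply: eq_bigr => I IB.
  have gap_ge0 J : J \in B -> 0 <= (f (m J))%:R - pairing f (yI J).
    by move=> JB; rewrite subr_ge0; apply: conv_pairing_le (yIB J JB) (m_max J JB).
  have gap0 : \sum_(J in B) ((f (m J))%:R - pairing f (yI J)) = 0.
    rewrite sumrB -pairing_sum val_max /vertex pairing_sum.
    by under [X in _ - X]eq_bigr do rewrite pairing_basisvec; rewrite subrr.
  have /eqP := psumr_eq0P gap_ge0 gap0 IB; rewrite subr_eq0 => /eqP /esym.
  apply: conv_pairing_max (yIB I IB) (m_max I IB) _ => c cmax.
  exact: uniq (m_max I IB).
Qed.

Lemma generic_nestohedron B f : set0 \notin B ->
  generic (nestohedron (R := R) B) f <-> unique_maxima B f.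
Proof. by move=> B0; split; [apply: generic_unique_maxima | apply: unique_maxima_generic]. Qed.

End Nestohedron.

Section Contraction.
Variables (n : nat) (B : {set {set 'I_n}}).
Implicit Types (I J K W : {set 'I_n}).

Lemma mem_contract_restrict W I J :
  (J \in contract W (restrict B W) I) = (J != set0) && [exists K in restrict B W, J == K :\: I].
Proof.
rewrite inE; congr (_ && _); apply/andP/exists_inP.
- case=> /subsetDP[_ JI] /orP[JBW | /existsP[I' /andP[I'I JI'BW]]].
    by exists J => //; rewrite (setDidPl JI).
  exists (J :|: I') => //.
  by rewrite setDUl (setDidPl JI) (_ : I' :\: I = set0) ?setU0 //; apply/eqP; rewrite setD_eq0.
- case=> K KBW /eqP ->; split.
    by rewrite setSD //; case/setIdP: KBW.
  apply/orP; right; apply/existsP; exists (K :&: I); rewrite subsetIr /=.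
  by rewrite setUC setID.
Qed.

Lemma discrete_contractionP W I : (forall v, [set v] \in B) ->
  reflect (forall K, K \in B -> K \subset W -> {in K :\: I &, forall a b, a = b})
          (discrete_on (W :\: I) (contract W (restrict B W) I)).
Proof.
move=> B1; apply: (iffP eqP) => [discrete K KB KW a b Ka Kb | small].
  have : K :\: I \in contract W (restrict B W) I.
    rewrite mem_contract_restrict; apply/andP; split; first by apply/set0Pn; exists a.
    by apply/exists_inP; exists K; rewrite ?inE ?KB.
  by rewrite discrete => /imsetP[w _ KIw]; move: Ka Kb; rewrite KIw !inE => /eqP-> /eqP->.
apply/setP => J; rewrite mem_contract_restrict; apply/andP/imsetP.
- case=> /set0Pn[w Jw] /exists_inP[K /setIdP[KB KW] /eqP JK].
  exists w; first by move: Jw; rewrite JK; apply: subsetP; apply: setSD.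
  apply/setP => c; rewrite inE; apply/idP/eqP => [Jc | ->//].
  by apply: (small K) => //; rewrite -JK.
- case=> w wWI ->; split; first by apply/set0Pn; exists w; rewrite inE.
  apply/exists_inP; exists [set w]; first by rewrite inE B1 sub1set; case/setDP: wWI.
  by apply/eqP/esym/setDidPl; rewrite disjoints1; case/setDP: wWI.
Qed.
End Contraction.

Definition sublevel n (rho : 'I_n -> nat) (j : nat) : {set 'I_n} := [set v | rho v < j].

Lemma discrete_sublevels n (B : {set {set 'I_n}}) (rho : 'I_n -> nat) k :
  (forall v, [set v] \in B) -> (forall v, rho v < k) ->
  (forall j, j < k -> discrete_on (sublevel rho j.+1 :\: sublevel rho j)
      (contract (sublevel rho j.+1) (restrict B (sublevel rho j.+1)) (sublevel rho j)))
  <-> unique_maxima B rho.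
Proof.
move=> B1 rho_lt; split=> [discrete | uniq j _].
  move=> K a b KB /is_max_onP[Ka amax] /is_max_onP[Kb bmax].
  have rho_ab : rho a = rho b by apply/eqP; rewrite eqn_leq amax ?bmax.
  move/(discrete_contractionP _ _ B1): (discrete _ (rho_lt a)) => /(_ K KB); apply.
  - by apply/subsetP => c Kc; rewrite inE ltnS amax.
  - by rewrite !inE ltnn Ka.
  - by rewrite !inE -rho_ab ltnn Kb.
apply/discrete_contractionP => // K KB /subsetP KW a b.
have lev c : c \in K :\: sublevel rho j -> is_max_on rho K c.
  case/setDP=> Kc; rewrite inE -leqNgt => jc; apply/is_max_onP; split=> // d Kd.
  by have := KW d Kd; rewrite inE ltnS => /leq_trans; apply.
by move=> /lev amax /lev bmax; apply: uniq amax bmax.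
Qed.

Lemma chain_sublevels n (c : seq {set 'I_n}) k :
  nth set0 c 0 = set0 -> nth set0 c k = setT ->
  (forall j, j < k -> nth set0 c j \subset nth set0 c j.+1) ->
  exists2 rho : 'I_n -> nat,
    forall v, rho v < k & forall j, j <= k -> nth set0 c j = sublevel rho j.
Proof.
move=> c0 ck step.
have mono i j : i <= j -> j <= k -> nth set0 c i \subset nth set0 c j.
  elim: j => [|j IH]; first by rewrite leqn0 => /eqP->.
  rewrite leq_eqVlt => /orP[/eqP-> // | ij] jk.
  exact: subset_trans (IH ij (ltnW jk)) (step j jk).
have ex v : exists j, v \in nth set0 c j.+1.
  have : v \in nth set0 c k by rewrite ck inE.
  by case: (k) => [|j] vk; [rewrite c0 inE in vk | exists j].
pose rho v := ex_minn (ex v).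
have rhoP v j : j <= k -> (v \in nth set0 c j) = (rho v < j).
  move=> jk; rewrite /rho; case: ex_minnP => r vr rmin; apply/idP/idP.
  - by case: j jk => [|j] jk vj; [rewrite c0 inE in vj | rewrite ltnS rmin].
  - by move=> rj; apply: subsetP (mono _ _ rj jk) v vr.
exists rho => [v | j jk]; last by apply/setP => v; rewrite inE rhoP.
by rewrite -rhoP // ck inE.
Qed.

Lemma eq_sublevel_rank n (rho1 rho2 : 'I_n -> nat) k :
  (forall v, rho1 v < k) -> (forall v, rho2 v < k) ->
  (forall j, j <= k -> sublevel rho1 j = sublevel rho2 j) -> rho1 =1 rho2.
Proof.
move=> lt1 lt2 e v.
have lt12 j : j <= k -> (rho1 v < j) = (rho2 v < j).
  by move=> jk; have /setP/(_ v) := e j jk; rewrite !inE.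
by apply/eqP; rewrite eqn_leq -ltnS lt12 ?ltnSn ?lt2 // -ltnS -lt12 ?ltnSn ?lt1.
Qed.

Lemma mem_iota0 j k : (j \in iota 0 k) = (j < k).
Proof. by rewrite mem_iota. Qed.

Section Counting.
Variables (n : nat) (B : {set {set 'I_n}}) (s : seq nat).
Local Notation alpha := (nonzeros s).
Local Notation k := (size (nonzeros s)).
Implicit Types g : {ffun 'I_n -> 'I_(size s)}.

Definition has_fibers g : bool :=
  [forall i : 'I_(size s), #|[set v | g v == i]| == nth 0 s i].

Definition level g v : nat := nz_rank s (g v).

Definition sublevel_chain g : k.+1.-tuple {set 'I_n} :=
  @Tuple k.+1 _ (mkseq (sublevel (level g)) k.+1) (introT eqP (size_mkseq _ _)).

Lemma nth_sublevel_chain g j : j <= k -> nth set0 (sublevel_chain g) j = sublevel (level g) j.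
Proof. by move=> jk; rewrite /= nth_mkseq. Qed.

Lemma has_fibers_neq0 g v : has_fibers g -> nth 0 s (g v) != 0.
Proof.
move=> /forallP /(_ (g v)) /eqP <-.
by rewrite -lt0n card_gt0; apply/set0Pn; exists v; rewrite inE.
Qed.

Lemma level_lt g v : nth 0 s (g v) != 0 -> level g v < k.
Proof. exact: nz_rank_lt_size. Qed.

Lemma fiber_sublevel g (i : 'I_(size s)) : (forall v, nth 0 s (g v) != 0) -> nth 0 s i != 0 ->
  [set v | g v == i] = sublevel (level g) (nz_rank s i).+1 :\: sublevel (level g) (nz_rank s i).
Proof.
move=> gnz si; apply/setP => v; rewrite !inE ltnS -leqNgt andbC -eqn_leq.
apply/eqP/eqP => [gvi | e]; first by rewrite /level gvi.
exact: val_inj (nz_rank_inj (ltn_ord _) (ltn_ord _) (gnz v) si e).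
Qed.

Lemma card_sublevel_step g j : has_fibers g -> j < k ->
  #|sublevel (level g) j.+1 :\: sublevel (level g) j| = nth 0 alpha j.
Proof.
move=> gf jk; have [i [si <-]] := nz_rank_surj jk.
rewrite -fiber_sublevel // => [|v]; last exact: has_fibers_neq0.
by rewrite (eqP (forallP gf i)) nth_nonzeros.
Qed.

Lemma sublevel_chainP g : (forall v, [set v] \in B) -> has_fibers g ->
  @splitting_chain n B alpha (sublevel_chain g) <-> unique_maxima B (level g).
Proof.
move=> B1 gf; have level_lt_k v := level_lt (has_fibers_neq0 v gf).
rewrite -(discrete_sublevels B1 level_lt_k).
split=> [/and3P[_ _ /allP steps] j jk | discrete].
  move: (steps j); rewrite mem_iota0 => /(_ jk) /and3P[_ _].
  by rewrite !nth_sublevel_chain ?(ltnW jk).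
apply/and3P; split.
- by rewrite nth_sublevel_chain //; apply/eqP/setP => v; rewrite !inE ltn0.
- by rewrite nth_sublevel_chain //; apply/eqP/setP => v; rewrite !inE level_lt_k.
apply/allP => j; rewrite mem_iota0 => jk; rewrite !nth_sublevel_chain ?(ltnW jk) //.
rewrite card_sublevel_step // eqxx discrete // andbT properE.
have -> : sublevel (level g) j \subset sublevel (level g) j.+1.
  by apply/subsetP => v; rewrite !inE => /ltnW.
rewrite -setD_eq0 -cards_eq0 card_sublevel_step //= andbT.
by have := mem_nth 0 jk; rewrite mem_filter => /andP[].
Qed.

Lemma sublevel_chain_inj g1 g2 : has_fibers g1 -> has_fibers g2 ->
  sublevel_chain g1 = sublevel_chain g2 -> g1 = g2.
Proof.
move=> g1f g2f e; apply/ffunP => v; apply: val_inj.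
have g1nz w := has_fibers_neq0 w g1f; have g2nz w := has_fibers_neq0 w g2f.
apply: nz_rank_inj (ltn_ord _) (ltn_ord _) (g1nz v) (g2nz v) _.
apply: (eq_sublevel_rank (fun w => level_lt (g1nz w)) (fun w => level_lt (g2nz w))) => j jk.
by rewrite -!nth_sublevel_chain // e.
Qed.

Lemma sublevel_chain_surj c : @splitting_chain n B alpha c ->
  exists2 g, has_fibers g & sublevel_chain g = c.
Proof.
case/and3P => /eqP c0 /eqP ck /allP steps.
have c_sub j : j < k -> nth set0 c j \subset nth set0 c j.+1.
  by rewrite -mem_iota0 => /steps /and3P[/proper_sub].
have c_card j : j < k -> #|nth set0 c j.+1 :\: nth set0 c j| = nth 0 alpha j.
  by rewrite -mem_iota0 => /steps /and3P[_ /eqP].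
have [rho rho_lt c_rho] := chain_sublevels c0 ck c_sub.
have [h hP] := fin_all_exists (fun v => nz_rank_surj (rho_lt v)).
pose g : {ffun 'I_n -> 'I_(size s)} := [ffun v => h v].
have gnz v : nth 0 s (g v) != 0 by rewrite ffunE; case: (hP v).
have sub_g j : j <= k -> sublevel (level g) j = nth set0 c j.
  by move=> jk; rewrite c_rho //; apply/setP => v; rewrite !inE /level ffunE (hP v).2.
exists g.
  apply/forallP => i; apply/eqP; have [si0 | si] := eqVneq (nth 0 s i) 0.
    rewrite si0; apply/eqP; rewrite cards_eq0; apply/eqP/setP => v; rewrite !inE.
    by apply/negbTE/eqP => gvi; have := gnz v; rewrite gvi si0.
  have rk := nz_rank_lt_size (ltn_ord i) si.
  rewrite fiber_sublevel // !sub_g ?(ltnW rk) //.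
  by rewrite c_card // nth_nonzeros.
apply/val_inj/(@eq_from_nth _ set0) => [|j]; first by rewrite !size_tuple.
by rewrite size_tuple ltnS => jk; rewrite nth_sublevel_chain // sub_g.
Qed.

End Counting.


Lemma coef_Fser_nestohedron (R : realFieldType) n (B : {set {set 'I_n}}) s :
  building_set B -> Fser (nestohedron (R := R) B) s = zeta B (nonzeros s).
Proof.
case=> B0 B1 _; rewrite /Fser.
have -> : [set g : {ffun 'I_n -> 'I_(size s)} |
    pbool (generic (nestohedron (R := R) B) (fun v => (g v).+1)) && has_fibers g] =
    [set g | has_fibers g && @splitting_chain n B (nonzeros s) (sublevel_chain g)].
  apply/setP => g; rewrite !inE andbC; case gf: (has_fibers g) => //=.
  have chain_generic : generic (nestohedron (R := R) B) (fun v => (g v).+1) <->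
      @splitting_chain n B (nonzeros s) (sublevel_chain g).
    rewrite generic_nestohedron // sublevel_chainP //.
    by apply: eq_unique_maxima => a b; rewrite ltnS leq_nz_rank ?has_fibers_neq0.
  by apply/pboolP/idP => /chain_generic.
rewrite /zeta -(card_in_imset (f := @sublevel_chain n s)) => [|g1 g2].
  apply: eq_card => c; rewrite inE; apply/imsetP/idP => [[g /setIdP[_ ch] -> //] | ch].
  by have [g gf gc] := sublevel_chain_surj ch; exists g; rewrite // inE gf gc.
by rewrite !inE => /andP[g1f _] /andP[g2f _]; apply: sublevel_chain_inj.
Qed.

Lemma has_fibers_sumn n s (g : {ffun 'I_n -> 'I_(size s)}) : has_fibers g -> sumn s = n.
Proof.
move=> gf; have -> : n = \sum_(i < size s) #|[set v | g v == i]|.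
  rewrite -{1}(card_ord n) -sum1_card (partition_big g xpredT) //=.
  by apply: eq_bigr => i _; rewrite -sum1_card; apply: eq_bigl => v; rewrite inE.
rewrite sumnE (big_nth 0) big_mkord; apply: eq_bigr => i _.
by rewrite (eqP (forallP gf i)).
Qed.

Lemma sumn_nonzeros s : sumn (nonzeros s) = sumn s.
Proof. by elim: s => //= e s IH; case: eqP => [->|_] /=; rewrite IH. Qed.

Lemma size_le_sumn (a : seq nat) : all (fun e => 0 < e) a -> size a <= sumn a.
Proof. by elim: a => //= x a IH /andP[x_gt0 /IH]; rewrite -add1n; apply: leq_add. Qed.

Lemma mem_le_sumn (a : seq nat) x : x \in a -> x <= sumn a.
Proof.
elim: a => //= y a IH; rewrite in_cons => /orP[/eqP-> | /IH]; first exact: leq_addr.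
by move/leq_trans; apply; apply: leq_addl.
Qed.

Lemma mem_seqs_upto k xs (a : seq nat) : size a <= k -> all (fun x => x \in xs) a ->
  a \in seqs_upto k xs.
Proof.
elim: k a => [|k IH] [|x a] //= a_k /andP[x_xs a_xs].
by rewrite in_cons /=; apply: (allpairs_f (fun x s => x :: s)) => //; apply: IH.
Qed.

Lemma nonzeros_in_compositions n s : (nonzeros s \in compositions n) = (sumn s == n).
Proof.
rewrite mem_undup mem_filter /is_composition sumn_nonzeros.
have [s_n|] := eqVneq (sumn s) n; last by rewrite andbF.
have pos : all (fun e => 0 < e) (nonzeros s).
  by apply/allP => e; rewrite mem_filter lt0n => /andP[].
rewrite pos; apply: mem_seqs_upto; first by rewrite -s_n -sumn_nonzeros size_le_sumn.
apply/allP => x x_s; rewrite mem_iota add1n ltnS (allP pos x x_s) /=.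
by rewrite -s_n -sumn_nonzeros mem_le_sumn.
Qed.

Theorem mainTheorem2 (R : realFieldType) (n : nat) (B : {set {set 'I_n}}) :
  building_set B -> connected_bs B ->
  Fser (nestohedron (R := R) B) =
  qsum (compositions n) (fun alpha => zeta B alpha) Mqsym.
Proof.
move=> HB _; apply: functional_extensionality => s; rewrite /qsum /Mqsym.
have [s_n | s_n] := eqVneq (sumn s) n.
  rewrite (bigD1_seq (nonzeros s)) ?undup_uniq ?nonzeros_in_compositions ?s_n //=.
  rewrite eqxx muln1 big1 ?addn0 => [|a a_s]; first exact: coef_Fser_nestohedron.
  by rewrite eq_sym (negbTE a_s) muln0.
rewrite big1_seq => [|a /andP[_ a_n]]; last first.
  by case: eqP a_n => [<- | _ _]; rewrite ?muln0 // nonzeros_in_compositions (negbTE s_n).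
apply/eqP; rewrite cards_eq0; apply/eqP/setP => g; rewrite !inE.
by apply/negP => /andP[_ /has_fibers_sumn gf]; rewrite gf eqxx in s_n.
Qed.
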